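(* Let $\mathbf L$ be a locally compact non-discrete non-Archimedean field. For each ultrametric space $(X,\rho)$ there exist a (topological) embedding $f:X\to B(c_0(\mathbf L,A_X),0,1)$ and a uniformly continuous embedding of $X$ into $c_0(\mathbf L,A_X)$, where $\mathrm{card}(A_X)=w(X)$ is the topological weight of $X$.
   Context: For a set $A$, $c_0(\mathbf L,A)$ is the Banach space of families $x=(x_a)_{a\in A}$ in $\mathbf L$ such that for every $b>0$ the set $\{a:|x_a|\ge b\}$ is finite, with norm $\|x\|=\sup_a|x_a|$; $B(c_0(\mathbf L,A),0,1)$ is its closed unit ball. An ultrametric space is a metric space whose metric satisfies $\rho(x,y)\le\max(\rho(x,z),\rho(z,y))$. *)

From HB Require Import structures.
From mathcomp Require Import all_boot all_order all_algebra.
From mathcomp Require Import boolp classical_sets functions cardinality reals.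
Set Implicit Arguments. Unset Strict Implicit. Unset Printing Implicit Defensive.
Import Order.TTheory GRing.Theory Num.Theory.
Local Open Scope classical_set_scope.
Local Open Scope ring_scope.

Section MetricNotions.
Variables (R : realType) (T : Type) (d : T -> T -> R).

Definition mopen (U : set T) : Prop :=
  forall x, U x -> exists e : R, 0 < e /\ forall y, d x y < e -> U y.

Definition mcompact (C : set T) : Prop :=
  forall F : set (set T), (forall U, F U -> mopen U) ->
    C `<=` \bigcup_(U in F) U ->
    exists G : set (set T), [/\ G `<=` F, finite_set G & C `<=` \bigcup_(U in G) U].

Definition mlocally_compact : Prop :=
  forall x, exists C : set T, mcompact C /\
    exists e : R, 0 < e /\ [set y | d x y < e] `<=` C.

Definition mdiscrete : Prop := forall x, mopen [set x].

Definition mbase (B : set (set T)) : Prop :=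
  (forall b, B b -> mopen b) /\
  (forall U, mopen U -> forall x, U x -> exists b, [/\ B b, b x & b `<=` U]).

(* card A = w(T): A has the cardinality of some base, and is at most the
   cardinality of every base (so it is the minimum). *)
Definition weight_card (A : Type) : Prop :=
  (exists B, mbase B /\ card_eq [set: A] B) /\
  (forall B, mbase B -> card_le [set: A] B).

Definition ultrametric : Prop :=
  [/\ forall x y, 0 <= d x y,
      forall x y, d x y = 0 <-> x = y,
      forall x y, d x y = d y x &
      forall x y z, d x y <= Num.max (d x z) (d z y)].
End MetricNotions.

Definition membedding (R : realType) (X Y : Type) (dX : X -> X -> R)
    (dY : Y -> Y -> R) (f : X -> Y) : Prop :=
  [/\ injective f,
      forall V, mopen dY V -> mopen dX (f @^-1` V) &
      forall U, mopen dX U -> exists V, mopen dY V /\ f @` U = V `&` range f].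

Definition unif_continuous (R : realType) (X Y : Type) (dX : X -> X -> R)
    (dY : Y -> Y -> R) (f : X -> Y) : Prop :=
  forall e : R, 0 < e -> exists del : R, 0 < del /\
    forall x y, dX x y < del -> dY (f x) (f y) < e.

Definition nonarch_abs (R : realType) (L : fieldType) (v : L -> R) : Prop :=
  [/\ forall x, 0 <= v x,
      forall x, v x = 0 <-> x = 0,
      forall x y, v (x * y) = v x * v y &
      forall x y, v (x + y) <= Num.max (v x) (v y)].

Definition absdist (R : realType) (L : fieldType) (v : L -> R) (x y : L) : R :=
  v (x - y).

Definition is_c0 (R : realType) (L : fieldType) (v : L -> R) (A : Type)
    (x : A -> L) : Prop :=
  forall b : R, 0 < b -> finite_set [set a | b <= v (x a)].

Definition c0 (R : realType) (L : fieldType) (v : L -> R) (A : Type) : Type :=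
  {x : A -> L | is_c0 v x}.

Definition c0norm (R : realType) (L : fieldType) (v : L -> R) (A : Type)
    (x : c0 v A) : R :=
  sup [set v (proj1_sig x a) | a in [set: A]].

Definition c0dist (R : realType) (L : fieldType) (v : L -> R) (A : Type)
    (x y : c0 v A) : R :=
  sup [set v (proj1_sig x a - proj1_sig y a) | a in [set: A]].

(* Fix p in L with 0 < |p| < 1 and a base B of X of least cardinality.  Every
   ball B(x, |p|^n) is open, hence contains a chosen member of B; the
   coordinate of x at b in B is the sum of the p^n over the balls around x
   credited to b.  If rho x y < |p|^N, the coordinates of x and y agree up to
   |p|^(N+1); if m is least with |p|^m <= rho x y, they differ by exactly |p|^m
   at the member credited to B(x, |p|^m).  A base of least cardinality
   exists by a Zorn argument on partial injections into all bases at once. *)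

From mathcomp Require Import all_boot all_order all_algebra.
From mathcomp Require Import boolp classical_sets functions cardinality reals.
From mathcomp Require Import lra.
Import Order.TTheory GRing.Theory Num.Theory.
Local Open Scope classical_set_scope.
Local Open Scope ring_scope.
Set Implicit Arguments. Unset Strict Implicit. Unset Printing Implicit Defensive.

Section NonArchimedeanAbs.
Context {R : realType} {L : fieldType} {v : L -> R}.
Hypothesis hv : nonarch_abs v.

Lemma nabs_ge0 x : 0 <= v x. Proof. by case: hv. Qed.

Lemma nabs_eq0 x : (v x = 0) <-> (x = 0). Proof. by case: hv. Qed.

Lemma nabs0 : v 0 = 0. Proof. exact/nabs_eq0. Qed.

Lemma nabsM x y : v (x * y) = v x * v y. Proof. by case: hv. Qed.

Lemma nabsD x y : v (x + y) <= Num.max (v x) (v y). Proof. by case: hv. Qed.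

Lemma nabs1 : v 1 = 1.
Proof.
have v1_neq0 : v 1 != 0 by apply/eqP => /nabs_eq0/eqP; rewrite oner_eq0.
by apply: (mulIf v1_neq0); rewrite mul1r -nabsM mulr1.
Qed.

Lemma nabsN x : v (- x) = v x.
Proof.
have vN1 : v (-1) = 1.
  apply/eqP; rewrite -(eqrXn2 (_ : 0 < 2)%N) ?nabs_ge0 //.
  by rewrite expr2 -nabsM mulrNN mulr1 nabs1 expr1n.
by rewrite -mulN1r nabsM vN1 mul1r.
Qed.

Lemma nabsX x n : v (x ^+ n) = v x ^+ n.
Proof. by elim: n => [|n IHn]; rewrite ?nabs1 // !exprS nabsM IHn. Qed.

Lemma nabsD_le x y c : v x <= c -> v y <= c -> v (x + y) <= c.
Proof. by move=> hx hy; apply: le_trans (nabsD x y) _; rewrite ge_max hx hy. Qed.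

Lemma nabsD_lt x y c : v x < c -> v y < c -> v (x + y) < c.
Proof. by move=> hx hy; apply: le_lt_trans (nabsD x y) _; rewrite gt_max hx hy. Qed.

Lemma nabsB_le x y c : v x <= c -> v y <= c -> v (x - y) <= c.
Proof. by move=> hx hy; apply: nabsD_le; rewrite ?nabsN. Qed.

Lemma nabsD_eql x y : v y < v x -> v (x + y) = v x.
Proof.
move=> lt_yx; apply/le_anti/andP; split; first exact: nabsD_le (ltW lt_yx).
rewrite leNgt; apply/negP => lt_xy_x.
have : v (x + y - y) < v x by apply: nabsD_lt; rewrite ?nabsN.
by rewrite addrK ltxx.
Qed.

Lemma nabs_sum_le (I : Type) (r : seq I) (P : pred I) (F : I -> L) c :
  0 <= c -> (forall i, P i -> v (F i) <= c) -> v (\sum_(i <- r | P i) F i) <= c.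
Proof.
move=> c_ge0 hF; apply: (big_ind (fun x => v x <= c)) => //.
  by rewrite nabs0.
by move=> x y; apply: nabsD_le.
Qed.

Lemma nabs_sum_lt (I : Type) (r : seq I) (P : pred I) (F : I -> L) c :
  0 < c -> (forall i, P i -> v (F i) < c) -> v (\sum_(i <- r | P i) F i) < c.
Proof.
move=> c_gt0 hF; apply: (big_ind (fun x => v x < c)) => //.
  by rewrite nabs0.
by move=> x y; apply: nabsD_lt.
Qed.

Lemma nondiscrete_nabs_gt0_lt1 :
  ~ mdiscrete (absdist v) -> exists p, 0 < v p < 1.
Proof.
move=> ndisc; apply/not_existsP => none; apply: ndisc => x y ->.
exists 1; split => // z vxz; apply: contrapT => zx; apply: (none (x - z)).
rewrite [_ < 1]vxz andbT lt_neqAle nabs_ge0 andbT eq_sym.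
by apply/eqP => /nabs_eq0/eqP; rewrite subr_eq0 => /eqP xz; apply: zx.
Qed.

End NonArchimedeanAbs.

Lemma bernoulli_ineq (R : realDomainType) (h : R) n :
  0 <= h -> 1 + h *+ n <= (1 + h) ^+ n.
Proof.
move=> h_ge0; elim: n => [|n IHn]; first by rewrite addr0.
rewrite exprS mulrSr; apply: le_trans (ler_wpM2l _ IHn); last exact: addr_ge0.
have : 0 <= h * h *+ n by rewrite mulrn_wge0 ?mulr_ge0.
rewrite mulrDl mulrDr !mul1r -mulrnAr; lra.
Qed.

Lemma exprn_lt_eps (R : archiRealFieldType) (t e : R) :
  0 < t -> t < 1 -> 0 < e -> exists n, t ^+ n < e.
Proof.
move=> t_gt0 t_lt1 e_gt0; pose h := t^-1 - 1.
have h_gt0 : 0 < h by rewrite subr_gt0 invf_gt1.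
pose n := Num.Def.archi_bound (e * h)^-1.
have ehn : (e * h)^-1 < n%:R by apply: archi_boundP; rewrite invr_ge0 ltW ?mulr_gt0.
exists n; have -> : t = (1 + h)^-1 by rewrite addrC subrK invrK.
rewrite exprVn -[e]invrK ltf_pV2 ?posrE ?invr_gt0 ?exprn_gt0 ?ltr_wpDr ?ltW //.
have := bernoulli_ineq n (ltW h_gt0).
rewrite invfM ltr_pdivrMr // in ehn.
rewrite -mulr_natl; lra.
Qed.

Section UltrametricBalls.
Context {R : realType} {X : Type} (rho : X -> X -> R).
Hypothesis hu : ultrametric rho.

Lemma um_ge0 x y : 0 <= rho x y. Proof. by case: hu. Qed.

Lemma um_eq0 x y : rho x y = 0 <-> x = y. Proof. by case: hu. Qed.

Lemma um_xx x : rho x x = 0. Proof. exact/um_eq0. Qed.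

Lemma um_sym x y : rho x y = rho y x. Proof. by case: hu. Qed.

Lemma um_le_max x y z : rho x y <= Num.max (rho x z) (rho z y). Proof. by case: hu. Qed.

Definition uball (c : X) (r : R) : set X := [set z | rho c z < r].

Lemma uball_center c r : 0 < r -> uball c r c.
Proof. by rewrite /uball /= um_xx. Qed.

Lemma uball_le c r s : r <= s -> uball c r `<=` uball c s.
Proof. by move=> le_rs z /lt_le_trans; apply. Qed.

Lemma uball_trans c r x y : uball c r x -> rho x y < r -> uball c r y.
Proof. by move=> cx xy; apply: le_lt_trans (um_le_max c y x) _; rewrite gt_max cx. Qed.

Lemma uball_eq x y r : rho x y < r -> uball x r = uball y r.
Proof.
move=> xy; apply/seteqP; split => z; last exact: uball_trans.
by move=> xz; apply: uball_trans (_ : uball y r x) xz; rewrite /uball /= um_sym.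
Qed.

Lemma uball_meet x y r z : uball x r z -> uball y r z -> rho x y < r.
Proof. by move=> xz yz; apply: uball_trans xz _; rewrite um_sym. Qed.

Lemma mopen_uball c r : mopen rho (uball c r).
Proof.
move=> x cx; exists r; split; last by move=> y; apply: uball_trans.
exact: le_lt_trans (um_ge0 c x) cx.
Qed.

End UltrametricBalls.

Section C0Space.
Context {R : realType} {L : fieldType} {v : L -> R} {A : Type}.
Hypothesis hv : nonarch_abs v.

Lemma sup_image_le (f : A -> R) c :
  0 <= c -> (forall a, f a <= c) -> sup [set f a | a in [set: A]] <= c.
Proof.
move=> c_ge0 fc; have [[a _]|A0] := pselect (exists a : A, True).
  by apply: ge_sup => [|_ [b _ <-]]; [exists (f a), a | apply: fc].
suff -> : [set f a | a in [set: A]] = set0 by rewrite sup0.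
by apply/seteqP; split => // y [a _ _]; apply: A0; exists a.
Qed.

Lemma c0_bounded (x : A -> L) : is_c0 v x -> exists M, forall a, v (x a) <= M.
Proof.
move=> /(_ 1 ltr01) /(finite_image (v \o x)) /finite_seqP [s s_def].
exists (\big[Num.max/1]_(r <- s) r) => a; have [lt_a1|le_1a] := ltP (v (x a)) 1.
  exact: le_trans (ltW lt_a1) (bigmax_ge_id _ _ _ _).
have s_xa : v (x a) \in s by change ([set` s] (v (x a))); rewrite -s_def; exists a.
exact: le_bigmax_seq.
Qed.

Lemma c0norm_le (x : c0 v A) c :
  0 <= c -> (forall a, v (sval x a) <= c) -> c0norm x <= c.
Proof. exact: sup_image_le. Qed.

Lemma c0dist_le (x y : c0 v A) c :
  0 <= c -> (forall a, v (sval x a - sval y a) <= c) -> c0dist x y <= c.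
Proof. exact: sup_image_le. Qed.

Lemma c0dist_ge (x y : c0 v A) a : v (sval x a - sval y a) <= c0dist x y.
Proof.
have [Mx hMx] := c0_bounded (svalP x); have [My hMy] := c0_bounded (svalP y).
apply: ub_le_sup; last by exists a.
exists (Num.max Mx My) => _ [b _ <-].
by apply: (nabsB_le hv); rewrite le_max (hMx, hMy) ?orbT.
Qed.

Lemma c0dist_ge0 (x y : c0 v A) : 0 <= c0dist x y.
Proof.
have [[a _]|A0] := pselect (exists a : A, True).
  exact: le_trans (nabs_ge0 hv _) (c0dist_ge x y a).
rewrite /c0dist; suff -> : [set v (sval x a - sval y a) | a in [set: A]] = set0.
  by rewrite sup0.
by apply/seteqP; split => // r [a _ _]; apply: A0; exists a.
Qed.

Lemma c0dist_xx (x : c0 v A) : c0dist x x = 0.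
Proof.
apply/le_anti; rewrite c0dist_ge0 andbT.
by apply: c0dist_le => // a; rewrite subrr (nabs0 hv).
Qed.

Lemma c0dist_triangle (x y z : c0 v A) : c0dist x z <= c0dist x y + c0dist y z.
Proof.
apply: c0dist_le => [|a]; first by rewrite addr_ge0 ?c0dist_ge0.
rewrite -[sval x a](subrK (sval y a)) -addrA.
apply: (nabsD_le hv); apply: le_trans (c0dist_ge _ _ a) _.
  by rewrite lerDl c0dist_ge0.
by rewrite lerDr c0dist_ge0.
Qed.

End C0Space.

Section UniformEmbedding.
Context {R : realType} {X Y : Type} (dX : X -> X -> R) (dY : Y -> Y -> R).
Hypotheses (dX_ge0 : forall x y, 0 <= dX x y)
  (dX_eq0 : forall x y, dX x y = 0 -> x = y)
  (dY_xx : forall w, dY w w = 0)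
  (dY_triangle : forall u v w, dY u w <= dY u v + dY v w).

Lemma unif_embedding_membedding (f : X -> Y) :
  unif_continuous dX dY f ->
  (forall e, 0 < e -> exists del, 0 < del /\
     forall x y, dY (f x) (f y) < del -> dX x y < e) ->
  membedding dX dY f.
Proof.
move=> f_unif finv_unif; split.
- move=> x y fxy; apply: dX_eq0; apply/le_anti; rewrite dX_ge0 andbT.
  rewrite leNgt; apply/negP => /finv_unif [del [del_gt0 hdel]].
  by have := hdel x y; rewrite fxy dY_xx ltxx => /(_ del_gt0).
- move=> V V_open x Vfx; have [e [e_gt0 he]] := V_open _ Vfx.
  have [del [del_gt0 hdel]] := f_unif e e_gt0.
  by exists del; split => // y /hdel /he.
- move=> U U_open.
  exists [set w | exists x, U x /\ exists del, 0 < del /\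
    dY (f x) w < del /\ forall y, dY (f x) (f y) < del -> U y].
  split.
    move=> w [x [Ux [del [del_gt0 [xw hdel]]]]].
    exists (del - dY (f x) w); split; first by rewrite subr_gt0.
    move=> w' ww'; exists x; split => //; exists del; split => //; split => //.
    by apply: le_lt_trans (dY_triangle _ w _) _; rewrite -ltrBrDl.
  apply/seteqP; split => w.
    case=> x Ux <-; split; last by exists x.
    have [e [e_gt0 he]] := U_open x Ux; have [del [del_gt0 hdel]] := finv_unif e e_gt0.
    exists x; split => //; exists del; split => //; rewrite dY_xx; split => // y.
    by move/hdel/he.
  case=> -[x [Ux [del [_ [xw hdel]]]]] [y _ yw].
  by exists y => //; apply: hdel; rewrite yw.
Qed.

End UniformEmbedding.

Section Coordinates.
Context {R : realType} {L : fieldType} {v : L -> R}.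
Hypothesis hv : nonarch_abs v.
Variable p : L.
Hypotheses (vp_gt0 : 0 < v p) (vp_lt1 : v p < 1).
Context {X : Type} {rho : X -> X -> R}.
Hypothesis hu : ultrametric rho.
Variable B : set (set X).
Hypothesis hB : mbase rho B.

Local Notation t := (v p).
Local Notation ball x n := (uball rho x (t ^+ n)).

Let tpow_gt0 n : 0 < t ^+ n. Proof. exact: exprn_gt0. Qed.
Let tpow_ge0 n : 0 <= t ^+ n. Proof. exact: ltW. Qed.
Let tpow_le m n : (m <= n)%N -> t ^+ n <= t ^+ m.
Proof. by rewrite ler_iXn2l. Qed.
Let tpow_lt m n : (m < n)%N -> t ^+ n < t ^+ m.
Proof. by rewrite ltr_iXn2l. Qed.

Definition inner_base (D : set X) : set X :=
  xget set0 (fun b => [/\ B b, b !=set0 & b `<=` D]).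

Lemma inner_baseP D : mopen rho D -> D !=set0 ->
  [/\ B (inner_base D), inner_base D !=set0 & inner_base D `<=` D].
Proof.
move=> D_open [x Dx].
apply: (@xgetPex _ set0 (fun b => [/\ B b, b !=set0 & b `<=` D])).
have [_ /(_ D D_open x Dx) [b [Bb bx bD]]] := hB.
by exists b; split => //; exists x.
Qed.

Lemma inner_base_ball x n :
  [/\ B (inner_base (ball x n)), inner_base (ball x n) !=set0
    & inner_base (ball x n) `<=` ball x n].
Proof. by apply: inner_baseP; [apply: mopen_uball | exists x; apply: uball_center]. Qed.

(* Each ball is counted once, at the least exponent describing it, and credited
   to the base element chosen inside it. *)
Definition marks (b : set X) (x : X) (n : nat) : Prop :=
  inner_base (ball x n) = b /\ forall k, (k < n)%N -> ball x k <> ball x n.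

Lemma marks_close b x y n : rho x y < t ^+ n -> marks b x n = marks b y n.
Proof.
move=> xy; have E k : (k <= n)%N -> ball x k = ball y k.
  by move=> kn; apply: (uball_eq hu); apply: lt_le_trans xy (tpow_le kn).
rewrite propeqE /marks (E n (leqnn n)).
split=> -[-> least]; split=> // k kn; have Ek := E k (ltnW kn).
  by rewrite -Ek; apply: least.
by rewrite Ek; apply: least.
Qed.

(* A base element b contains a ball B(y, t^M); once n > M, B(x, t^n) cannot
   contain b without being equal to B(x, t^M). *)
Lemma marks_bounded b : exists N, forall x n, marks b x n -> (n < N)%N.
Proof.
have [[x0 [n0 [bx0 _]]]|none] := pselect (exists x n, marks b x n); last first.
  by exists 0%N => x n bxn; case: none; exists x, n.
have [Bb [y by_] _] := inner_base_ball x0 n0; rewrite bx0 in Bb by_.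
have [e [e_gt0 ye]] := hB.1 b Bb y by_.
have [M tM] := exprn_lt_eps vp_gt0 vp_lt1 e_gt0.
exists M.+1 => x n [bxn least]; rewrite ltnS leqNgt; apply/negP => lt_Mn.
have [_ _] := inner_base_ball x n; rewrite bxn => b_sub.
apply: (least M lt_Mn); apply/seteqP; split; last exact/uball_le/tpow_le/ltnW.
rewrite (uball_eq hu (lt_le_trans (b_sub y by_) (tpow_le (ltnW lt_Mn)))).
by move=> z yz; apply/b_sub/ye/(lt_trans yz).
Qed.

Definition level_bound b : nat :=
  xget 0%N (fun N => forall x n, marks b x n -> (n < N)%N).

Lemma level_boundP b x n : marks b x n -> (n < level_bound b)%N.
Proof. exact: (xgetPex 0%N (marks_bounded b)). Qed.

Definition mark_term b x n : L := if `[< marks b x n >] then p ^+ n else 0.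

Definition coord x b : L := \sum_(n < level_bound b) mark_term b x n.

Lemma nabs_mark_term b x n : v (mark_term b x n) <= t ^+ n.
Proof. by rewrite /mark_term; case: ifP; rewrite ?(nabsX hv) ?(nabs0 hv). Qed.

Lemma nabs_mark_termB b x y n : v (mark_term b x n - mark_term b y n) <= t ^+ n.
Proof. by apply: (nabsB_le hv); apply: nabs_mark_term. Qed.

Lemma nabs_coord_le1 x b : v (coord x b) <= 1.
Proof.
apply: (nabs_sum_le hv) => // n _; apply: le_trans (nabs_mark_term _ _ _) _.
by rewrite exprn_ile1 ?ltW.
Qed.

Lemma nabs_coordB_le x y b N :
  rho x y < t ^+ N -> v (coord x b - coord y b) <= t ^+ N.+1.
Proof.
move=> xy; rewrite /coord -sumrB; apply: (nabs_sum_le hv) => // -[n _] _ /=.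
have [le_nN|lt_Nn] := leqP n N.
  rewrite /mark_term (marks_close _ (lt_le_trans xy (tpow_le le_nN))).
  by rewrite subrr (nabs0 hv).
exact: le_trans (nabs_mark_termB _ _ _ _) (tpow_le lt_Nn).
Qed.

(* With m least such that t^m <= rho x y, the base element assigned to
   B(x, t^m) separates x from y at level exactly m. *)
Lemma nabs_coordB_ge x y N : t ^+ N <= rho x y ->
  exists2 b, B b & t ^+ N <= v (coord x b - coord y b).
Proof.
move=> xy.
have [m m_far m_min] := ex_minnP (ex_intro (fun n => t ^+ n <= rho x y) N xy).
have close k : (k < m)%N -> rho x y < t ^+ k.
  by move=> km; rewrite ltNge; apply/negP => /m_min; rewrite leqNgt km.
pose b := inner_base (ball x m).
have [Bb [z bz] b_sub] := inner_base_ball x m.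
have y_far : ~ ball x m y by rewrite /uball /= ltNge m_far.
have bxm : marks b x m.
  by split => // k km ball_km; apply: y_far; rewrite -ball_km; apply: close.
have not_bym : ~ marks b y m.
  case=> byb _; have [_ _] := inner_base_ball y m; rewrite byb => b_sub'.
  exact/y_far/(uball_meet hu (b_sub z bz) (b_sub' z bz)).
exists b => //; apply: le_trans (tpow_le (m_min N xy)) _.
rewrite /coord -sumrB (bigD1 (Ordinal (level_boundP bxm))) //=.
have -> : mark_term b x m = p ^+ m by rewrite /mark_term asboolT.
have -> : mark_term b y m = 0 by rewrite /mark_term asboolF.
rewrite subr0 (nabsD_eql hv) (nabsX hv) //.
apply: (nabs_sum_lt hv) => [|[k k_lt] /= k_neq]; first exact: tpow_gt0.
have [lt_km|lt_mk|eq_km] := ltngtP k m.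
- by rewrite /mark_term (marks_close _ (close k lt_km)) subrr (nabs0 hv).
- exact: le_lt_trans (nabs_mark_termB _ _ _ _) (tpow_lt lt_mk).
- by case/eqP: k_neq; apply: val_inj.
Qed.

Lemma coord_c0 x : is_c0 v (fun b : set_type B => coord x (val b)).
Proof.
move=> e e_gt0; have [K tK] := exprn_lt_eps vp_gt0 vp_lt1 e_gt0.
have Bball n : inner_base (ball x n) \in B.
  by case: (inner_base_ball x n) => Bb _ _; apply: mem_set.
pose g n : set_type B := SigSub (Bball n).
apply: (sub_finite_set _ (finite_image g (finite_II K))) => -[b Bb] /= e_le.
have [n bxn e_tn] : exists2 n, marks b x n & e <= t ^+ n.
  apply: contrapT => none; move: e_le; apply/negP; rewrite -ltNge.
  apply: (nabs_sum_lt hv) => // n _; rewrite /mark_term.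
  case: asboolP => [bxn|_]; last by rewrite (nabs0 hv).
  by rewrite (nabsX hv) ltNge; apply/negP => e_tn; apply: none; exists n.
exists n; first by rewrite /= -(ltr_iXn2l vp_gt0 vp_lt1) (lt_le_trans tK e_tn).
by apply: val_inj; case: bxn.
Qed.

Definition coord_map x : c0 v (set_type B) := exist _ _ (coord_c0 x).

Lemma c0norm_coord_map x : c0norm (coord_map x) <= 1.
Proof. by apply: c0norm_le => // b; apply: nabs_coord_le1. Qed.

Lemma c0dist_coord_map_le x y N :
  rho x y < t ^+ N -> c0dist (coord_map x) (coord_map y) <= t ^+ N.+1.
Proof. by move=> xy; apply: c0dist_le => // b; apply: nabs_coordB_le. Qed.

Lemma c0dist_coord_map_lt x y N :
  c0dist (coord_map x) (coord_map y) < t ^+ N -> rho x y < t ^+ N.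
Proof.
rewrite ltNge => /negP d_lt; rewrite ltNge; apply/negP => /nabs_coordB_ge [b Bb].
move=> b_far; apply: d_lt; apply: le_trans b_far _.
exact: (c0dist_ge hv (coord_map x) (coord_map y) (SigSub (mem_set Bb))).
Qed.

Lemma coord_map_unif_continuous : unif_continuous rho (@c0dist R L v _) coord_map.
Proof.
move=> e e_gt0; have [N tN] := exprn_lt_eps vp_gt0 vp_lt1 e_gt0.
exists (t ^+ N); split => // x y /c0dist_coord_map_le d_le.
exact: le_lt_trans d_le (le_lt_trans (tpow_le (leqnSn N)) tN).
Qed.

Lemma coord_map_membedding : membedding rho (@c0dist R L v _) coord_map.
Proof.
apply: unif_embedding_membedding.
- exact: um_ge0.
- by move=> x y /(um_eq0 hu).
- exact: c0dist_xx.
- exact: c0dist_triangle.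
- exact: coord_map_unif_continuous.
- move=> e e_gt0; have [N tN] := exprn_lt_eps vp_gt0 vp_lt1 e_gt0.
  by exists (t ^+ N); split => // x y /c0dist_coord_map_lt /lt_trans; apply.
Qed.

End Coordinates.

Lemma card_le_fun {T V : Type} (A : set T) (B : set V) (f : T -> V) :
  {homo f : x / A x >-> B x} -> {in A &, injective f} -> (A #<= B)%card.
Proof.
move=> fAB f_inj; have [g] : $|{injfun A >-> B}| by apply/injfunPex; exists f.
exact: inj_card_le.
Qed.

Section CardMinimum.
Context {U : Type} (F : set (set U)) (S : set U).
Hypothesis FS : F S.

(* A triple (A, i, a) pairs the index i in S with the point a in A; for each A
   the pairing is a partial injection from S into A, and the set of paired
   indices is the same for all members of F. *)
Definition sim_matching (G : set (set U * U * U)) : Prop :=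
  [/\ forall A i a, G (A, i, a) -> [/\ F A, S i & A a],
      forall A i a a', G (A, i, a) -> G (A, i, a') -> a = a',
      forall A i i' a, G (A, i, a) -> G (A, i', a) -> i = i' &
      forall A A' i a, G (A, i, a) -> F A' -> exists a', G (A', i, a')].

Lemma sim_matching_bigcup (Gs : set (set (set U * U * U))) :
  Gs `<=` sim_matching -> total_on Gs subset ->
  sim_matching (\bigcup_(G in Gs) G).
Proof.
move=> Gs_match Gs_tot; split.
- by move=> A i a [G GsG Gt]; have [G_sub _ _ _] := Gs_match G GsG; apply: G_sub.
- move=> A i a a' [G1 Gs1 G1t] [G2 Gs2 G2t].
  have [G12|G21] := Gs_tot _ _ Gs1 Gs2.
    by have [_ G_fun _ _] := Gs_match G2 Gs2; apply: G_fun (G12 _ G1t) G2t.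
  by have [_ G_fun _ _] := Gs_match G1 Gs1; apply: G_fun G1t (G21 _ G2t).
- move=> A i i' a [G1 Gs1 G1t] [G2 Gs2 G2t].
  have [G12|G21] := Gs_tot _ _ Gs1 Gs2.
    by have [_ _ G_inj _] := Gs_match G2 Gs2; apply: G_inj (G12 _ G1t) G2t.
  by have [_ _ G_inj _] := Gs_match G1 Gs1; apply: G_inj G1t (G21 _ G2t).
- move=> A A' i a [G GsG Gt] FA'; have [_ _ _ /(_ _ _ _ _ Gt FA')] := Gs_match G GsG.
  by case=> a' G't; exists a'; exists G.
Qed.

Section Matching.
Variable G : set (set U * U * U).
Hypothesis G_match : sim_matching G.

Lemma sim_matching_cover_card_le A : F A -> (forall a, A a -> exists i, G (A, i, a)) ->
  forall A', F A' -> (A #<= A')%card.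
Proof.
move=> FA A_cov A' FA'; have [G_sub G_fun G_inj G_dom] := G_match.
have [g gP] : {g : U -> U & forall a, A a -> exists i, G (A, i, a) /\ G (A', i, g a)}.
  apply: (choice (P := fun a b => A a -> exists i, G (A, i, a) /\ G (A', i, b))) => a.
  have [Aa|nAa] := pselect (A a); last by exists a => /nAa.
  have [i Gi] := A_cov a Aa; have [a' Gi'] := G_dom _ _ _ _ Gi FA'.
  by exists a' => _; exists i.
apply: (card_le_fun (f := g)) => [a /gP [i [_ /G_sub []]] //|a1 a2].
rewrite !in_setE => /gP [i1 [G1 G1']] /gP [i2 [G2 G2']] g12.
by rewrite g12 in G1'; rewrite (G_inj _ _ _ _ G1' G2') in G1; apply: G_fun G1 G2.
Qed.

Lemma sim_matching_total_card_le : (forall i, S i -> exists a, G (S, i, a)) ->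
  forall A, F A -> (S #<= A)%card.
Proof.
move=> S_tot A FA; have [G_sub G_fun G_inj G_dom] := G_match.
have [g gP] : {g : U -> U & forall i, S i -> G (A, i, g i)}.
  apply: (choice (P := fun i a => S i -> G (A, i, a))) => i.
  have [Si|nSi] := pselect (S i); last by exists i => /nSi.
  by have [a Ga] := S_tot i Si; have [a' Ga'] := G_dom _ _ _ _ Ga FA; exists a'.
apply: (card_le_fun (f := g)) => [i /gP /G_sub [] //|i1 i2].
by rewrite !in_setE => /gP G1 /gP G2 g12; rewrite g12 in G1; apply: G_inj G1 G2.
Qed.

Lemma sim_matching_extend i0 (pick : set U -> U) : S i0 ->
  (forall A a, ~ G (A, i0, a)) ->
  (forall A, F A -> A (pick A) /\ forall i, ~ G (A, i, pick A)) ->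
  sim_matching (G `|` [set (A, i0, pick A) | A in F]).
Proof.
move=> Si0 i0_free pickP; have [G_sub G_fun G_inj G_dom] := G_match.
split.
- move=> A i a [/G_sub //|[A' FA' [<- <- <-]]].
  by split => //; case: (pickP A' FA').
- move=> A i a a' [Gt|[A1 _ [eA1 ei ea]]] [Gt'|[A2 _ [eA2 ei' ea']]].
  + exact: G_fun Gt Gt'.
  + by case: (i0_free A a); rewrite ei'.
  + by case: (i0_free A a'); rewrite ei.
  + by rewrite -ea -ea' eA1 -eA2.
- move=> A i i' a [Gt|[A1 FA1 [eA1 ei ea]]] [Gt'|[A2 FA2 [eA2 ei' ea']]].
  + exact: G_inj Gt Gt'.
  + by case: (pickP A2 FA2) => _ /(_ i); rewrite ea' eA2.
  + by case: (pickP A1 FA1) => _ /(_ i'); rewrite ea eA1.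
  + by rewrite -ei -ei'.
- move=> A A' i a [Gt|[A1 _ [_ <- _]]] FA'.
    by have [a' Gt'] := G_dom _ _ _ _ Gt FA'; exists a'; left.
  by exists (pick A'); right; exists A'.
Qed.

End Matching.

(* Zorn's lemma gives a maximal simultaneous matching; if no member of F is
   covered and S is not exhausted, one more index can be matched. *)
Lemma exists_card_minimum : exists A0, F A0 /\ forall A, F A -> (A0 #<= A)%card.
Proof.
have [G [G_match G_max]] := Zorn_bigcup sim_matching_bigcup.
have [[A [FA A_cov]]|no_cover] :=
  pselect (exists A, F A /\ forall a, A a -> exists i, G (A, i, a)).
  by exists A; split => //; apply: (sim_matching_cover_card_le G_match FA A_cov).
have [S_tot|] := pselect (forall i, S i -> exists a, G (S, i, a)).
  by exists S; split => //; apply: (sim_matching_total_card_le G_match S_tot).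
move=> /existsNP [i0 /not_implyP [Si0 /forallNP i0_free_S]]; exfalso.
have [G_sub _ _ G_dom] := G_match.
have i0_free A a : ~ G (A, i0, a).
  by move=> /(G_dom _ S) /(_ FS) [a' ?]; apply: (i0_free_S a').
have [pick pickP] : {pick : set U -> U &
    forall A, F A -> A (pick A) /\ forall i, ~ G (A, i, pick A)}.
  apply: (choice (P := fun A a => F A -> A a /\ forall i, ~ G (A, i, a))) => A.
  have [FA|nFA] := pselect (F A); last by exists i0 => /nFA.
  have /existsNP [a /not_implyP [Aa /forallNP a_free]] :
      ~ forall a, A a -> exists i, G (A, i, a).
    by move=> A_cov; apply: no_cover; exists A.
  by exists a.
apply: (G_max _ _ (sim_matching_extend G_match Si0 i0_free pickP)).
split; first exact: subsetUl.
move=> /(_ (S, i0, pick S)) G_new; apply: (i0_free S (pick S)).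
by apply: G_new; right; exists S.
Qed.

End CardMinimum.

Lemma mopen_base {R : realType} {X : Type} (rho : X -> X -> R) : mbase rho (mopen rho).
Proof. by split => // U U_open x Ux; exists U; split. Qed.

Theorem theorem2p4 (R : realType) (L : fieldType) (v : L -> R) :
  nonarch_abs v ->
  ~ mdiscrete (absdist v) ->
  mlocally_compact (absdist v) ->
  forall (X : Type) (rho : X -> X -> R), ultrametric rho ->
  exists A : Type,
    weight_card rho A /\
    (exists f : X -> c0 v A,
        (forall x, c0norm (f x) <= 1) /\ membedding rho (@c0dist R L v A) f) /\
    (exists g : X -> c0 v A,
        unif_continuous rho (@c0dist R L v A) g /\
        membedding rho (@c0dist R L v A) g).
Proof.
move=> hv ndisc _ X rho hu.
have [B [hB B_min]] := exists_card_minimum (mopen_base rho).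
have [p /andP[vp_gt0 vp_lt1]] := nondiscrete_nabs_gt0_lt1 hv ndisc.
exists (set_type B); split.
  split; first by exists B; split => //; apply: card_setT.
  by move=> B' hB'; rewrite (card_le_eql (card_setT B)); apply: B_min.
split; exists (coord_map hv vp_gt0 vp_lt1 hu hB); split.
- exact: c0norm_coord_map.
- exact: coord_map_membedding.
- exact: coord_map_unif_continuous.
- exact: coord_map_membedding.
Qed.
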